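(* Let $p, q, r$ be positive integers with $p \le q$ and $r \ge 2$, and let $\lambda\in\Lambda^{p,q,r}_{+}$. Then: (1) If $p=q=1$: $\mathcal{F}(\lambda;\Lambda^{1,1,r}) \simeq \mathcal{F}(T^{1,1,r}_{1,1,2}(\lambda);\Lambda^{1,1,2})$ if $\lambda\in\operatorname{Fix}(T^{1,1,2}_{1,1,r}\circ T^{1,1,r}_{1,1,2})$, and $\mathcal{F}(\lambda;\Lambda^{1,1,r})\simeq\mathrm{pt}$ otherwise. (2) If $p=1$ and $q\ge 2$: $\mathcal{F}(\lambda;\Lambda^{1,q,r}) \simeq \mathcal{F}(T^{1,q,r}_{1,2,2}(\lambda);\Lambda^{1,2,2})$ if $\lambda\in\operatorname{Fix}(T^{1,2,2}_{1,q,r}\circ T^{1,q,r}_{1,2,2})$, and $\mathcal{F}(\lambda;\Lambda^{1,q,r})\simeq\mathrm{pt}$ otherwise. (3) If $2\le p\le q$: $\mathcal{F}(\lambda;\Lambda^{p,q,r}) \simeq \mathcal{F}(T^{p,q,r}_{2,2,2}(\lambda);\Lambda^{2,2,2})$ if $\lambda\in\operatorname{Fix}(T^{2,2,2}_{p,q,r}\circ T^{p,q,r}_{2,2,2})$, and $\mathcal{F}(\lambda;\Lambda^{p,q,r})\simeq\mathrm{pt}$ otherwise. Here $\simeq$ is homotopy equivalence and $\mathrm{pt}$ the one-point space.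
   Context: $\mathbb{N}=\{0,1,2,\dots\}$. For an additive commutative monoid $\Lambda$ that is cancellative and has no non-trivial invertible elements, define the partial order $\lambda \le \mu$ iff there is $\nu\in\Lambda$ with $\lambda+\nu=\mu$; $\lambda<\mu$ means $\lambda\le\mu$, $\lambda\ne\mu$. Let $\Lambda_+=\Lambda\setminus\{0\}$. For a poset $P$, $|P|$ is the geometric realization of its order complex and $(x,y)_P=\{z\in P:x<z<y\}$. The Frobenius complex is $\mathcal{F}(\lambda;\Lambda)=|(0,\lambda)_\Lambda|$ for $\lambda\in\Lambda_+$. For positive integers $p,q,r$, $\Lambda^{p,q,r}=\langle a,b,c\mid pa+qb=rc\rangle$ is the quotient of the free commutative monoid $\mathbb{N}a\oplus\mathbb{N}b\oplus\mathbb{N}c$ by the congruence generated by $\lambda+pa+qb\sim\lambda+rc$. For positive integers $p,q$, $\tau^p_q:\mathbb{N}\to\mathbb{N}$ is $\tau^p_q(mp+n)=mq+\min\{n,q-1\}$ ($m\in\mathbb{N}$, $0\le n<p$). For positive integers $p,q,r,s,t,u$, the transition map $T^{p,q,r}_{s,t,u}:\Lambda^{p,q,r}\to\Lambda^{s,t,u}$ is $T^{p,q,r}_{s,t,u}(ma+nb+kc)=\tau^p_s(m)a+\tau^q_t(n)b+\tau^r_u(k)c$. For a function $f$ on a set $X$, $\operatorname{Fix} f=\{x\in X:f(x)=x\}$. *)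

From HB Require Import structures.
From Stdlib Require Import Relation_Operators.
From mathcomp Require Import all_boot all_order all_algebra.
From mathcomp Require Import all_classical all_reals all_analysis.
From mathcomp Require Import Rstruct Rstruct_topology.
Set Implicit Arguments. Unset Strict Implicit. Unset Printing Implicit Defensive.
Import Order.TTheory GRing.Theory Num.Theory.
Local Open Scope classical_set_scope.
Local Open Scope ring_scope.

Notation RR := Rdefinitions.R.

(* elements of the free commutative monoid N a + N b + N c *)
Definition triple := (nat * nat * nat)%type.
Definition tadd (x y : triple) : triple :=
  (x.1.1 + y.1.1, x.1.2 + y.1.2, x.2 + y.2)%N.
Definition t0 : triple := (0, 0, 0)%N.

Definition gstep (p q r : nat) (x y : triple) : Prop :=
  exists l : triple, x = tadd l (p, q, 0%N) /\ y = tadd l (0%N, 0%N, r).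

(* the congruence generated by the relation (it is the equivalence closure,
   which is automatically compatible with addition since gstep is) *)
Definition tcong (p q r : nat) : triple -> triple -> Prop :=
  clos_refl_sym_trans triple (gstep p q r).

(* elements of Lambda^{p,q,r} are congruence classes *)
Definition cls (p q r : nat) (x : triple) : set triple := [set y | tcong p q r x y].
Definition isElt (p q r : nat) (S : set triple) : Prop := exists x, S = cls p q r x.
Definition zeroL (p q r : nat) : set triple := cls p q r t0.

(* lambda <= mu iff exists nu, lambda + nu = mu (addition of classes = class of sums) *)
Definition leL (p q r : nat) (S T : set triple) : Prop :=
  exists x y v : triple,
    [/\ S = cls p q r x, T = cls p q r y & tcong p q r (tadd x v) y].
Definition ltL (p q r : nat) (S T : set triple) : Prop := leL p q r S T /\ S <> T.

Definition posL (p q r : nat) (S : set triple) : Prop := isElt p q r S /\ S <> zeroL p q r.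

Definition intervalL (p q r : nat) (lam : set triple) : set (set triple) :=
  [set S | [/\ isElt p q r S, ltL p q r (zeroL p q r) S & ltL p q r S lam]].

(* |P| : points are finitely supported nonnegative weight functions on P with
   total weight 1 whose support is a chain; topology = subspace of the product
   topology on E -> R (for finite P this is the usual topology). *)
Definition realization (E : choiceType) (lt : E -> E -> Prop) (P : set E)
  : set {ptws E -> RR} :=
  [set f : {ptws E -> RR} |
    [/\ (forall x, 0 <= f x),
        (forall x, f x != 0 -> P x),
        finite_set [set x | f x != 0],
        (\sum_(x \in [set x | f x != 0]) f x)%R = 1 &
        (forall x y, f x != 0 -> f y != 0 -> [\/ x = y, lt x y | lt y x])]].

Definition Frob (p q r : nat) (lam : set triple) : set {ptws set triple -> RR} :=
  realization (ltL p q r) (intervalL p q r lam).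

Definition homotopic_in {T U : topologicalType} (A : set T) (B : set U)
  (f g : T -> U) : Prop :=
  exists H : RR * T -> U,
    [/\ {within [set tx : RR * T | (0 <= tx.1 <= 1)%R /\ A tx.2], continuous H},
        (forall t x, (0 <= t <= 1)%R -> A x -> B (H (t, x))),
        (forall x, A x -> H (0%R, x) = f x) &
        (forall x, A x -> H (1%R, x) = g x)].

Definition htpy_equiv {T U : topologicalType} (A : set T) (B : set U) : Prop :=
  exists (f : T -> U) (g : U -> T),
    [/\ {within A, continuous f}, (forall x, A x -> B (f x)),
        {within B, continuous g} & (forall y, B y -> A (g y))] /\
    homotopic_in A A (g \o f) id /\ homotopic_in B B (f \o g) id.

Definition pt : set RR := [set 0%R].

(* tau^p_q (m p + n) = m q + min(n, q-1) *)
Definition tau (p q m : nat) : nat := ((m %/ p) * q + minn (m %% p) q.-1)%N.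

Definition Trep (p q r s t u : nat) (x : triple) : triple :=
  (tau p s x.1.1, tau q t x.1.2, tau r u x.2).

Definition Tmap (p q r s t u : nat) (S : set triple) : set triple :=
  [set z | exists x, S x /\ tcong s t u (Trep p q r s t u x) z].

From Stdlib Require Import Relation_Operators.
From mathcomp Require Import all_boot all_order all_algebra.
From mathcomp Require Import all_classical all_reals all_analysis.
From mathcomp Require Import Rstruct Rstruct_topology.
From mathcomp Require Import lra zify.
Set Implicit Arguments. Unset Strict Implicit. Unset Printing Implicit Defensive.
Import Order.TTheory GRing.Theory Num.Theory.
Local Open Scope classical_set_scope.
Local Open Scope ring_scope.

(* The weight a, b |-> r, c |-> p + q grades Λ^{p,q,r}, so every interval
   (0, λ) is a finite poset on which the weight is a strictly monotone height.
   For admissible (s, t, u), T = T^{p,q,r}_{s,t,u} and T' = T^{s,t,u}_{p,q,r}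
   are monotone with T ∘ T' = id and T' ∘ T ≤ id.  If T'Tλ = λ they restrict
   to maps between (0, λ) and (0, Tλ), and a monotone map below the identity is
   homotopic to it on the order complex, so the realizations are homotopy
   equivalent.  Otherwise c = T'Tλ lies in (0, λ) and x ≥ T'Tx ≤ c on (0, λ),
   a conical contraction onto c.  All homotopies are explicit in barycentric
   coordinates: the mass of each vertex x flows to T'Tx one height level at a
   time, so supports stay chains. *)

Lemma ptws_continuous (X : topologicalType) (E : Type) (F : X -> {ptws E -> RR}) :
  (forall y, continuous (fun x => F x y)) -> continuous F.
Proof.
move=> hF x; apply/cvg_sup => y.
exact: (@continuous_comp_initial _ X _ (fun f : E -> RR => f y) F (hF y)).
Qed.

Lemma ptws_eval_continuous (E : choiceType) (y : E) :
  continuous (fun f : {ptws E -> RR} => f y).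
Proof. exact: (@proj_continuous E (fun _ => RR) y). Qed.

Section RealContinuity.
Variable X : topologicalType.
Implicit Types f g : X -> RR.

Lemma continuous_addR f g :
  continuous f -> continuous g -> continuous (fun x => f x + g x).
Proof. by move=> hf hg x; apply: (@continuousD _ RR^o X f g x (hf x) (hg x)). Qed.

Lemma continuous_subR f g :
  continuous f -> continuous g -> continuous (fun x => f x - g x).
Proof. by move=> hf hg x; apply: (@continuousB _ RR^o X f g x (hf x) (hg x)). Qed.

Lemma continuous_mulR f g :
  continuous f -> continuous g -> continuous (fun x => f x * g x).
Proof. by move=> hf hg x; exact: cvgM (hf x) (hg x). Qed.

Lemma continuous_sumR (I : Type) (s : seq I) (F : I -> X -> RR) :
  (forall i, continuous (F i)) -> continuous (fun x => \sum_(i <- s) F i x).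
Proof.
move=> hF; elim: s => [|i s IH].
  under eq_fun do rewrite big_nil; exact: cst_continuous.
under eq_fun do rewrite big_cons; exact: continuous_addR.
Qed.

End RealContinuity.

Definition clamp (z : RR) : RR := (`|z| - `|z - 1| + 1) / 2.

Lemma clampE z : clamp z = if z <= 0 then 0 else if 1 <= z then 1 else z.
Proof.
rewrite /clamp; case: (lerP z 0) => h0.
  have h1 : z - 1 <= 0 by lra.
  have := ler0_norm h0; have := ler0_norm h1; lra.
have := gtr0_norm h0; case: (lerP 1 z) => h1.
  have h2 : 0 <= z - 1 by lra.
  have := ger0_norm h2; lra.
have h2 : z - 1 < 0 by lra.
have := ltr0_norm h2; lra.
Qed.

Lemma clamp_continuous : continuous clamp.
Proof.
have id_cont : continuous (fun z : RR => z) by move=> ?; exact: cvg_id.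
apply: continuous_mulR; last exact: cst_continuous.
apply: continuous_addR; last exact: cst_continuous.
have norm_cont (f : RR -> RR) : continuous f -> continuous (fun z => `|f z|).
  move=> hf z; apply: (@continuous_comp _ _ _ f (Num.norm : RR^o -> RR)); first exact: hf.
  exact: (@norm_continuous _ RR^o).
apply: continuous_subR; apply: norm_cont => //.
by apply: continuous_subR => //; exact: cst_continuous.
Qed.

Ltac clamp_lra := rewrite clampE; repeat (case: ifPn; rewrite -?ltNge => ?); lra.

Lemma clamp_itv z : 0 <= clamp z <= 1.
Proof. by apply/andP; split; clamp_lra. Qed.

Lemma clamp0 z : z <= 0 -> clamp z = 0.
Proof. by move=> ?; clamp_lra. Qed.

Lemma clamp1 z : 1 <= z -> clamp z = 1.
Proof. by move=> ?; clamp_lra. Qed.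

Lemma clamp_neq0 z : clamp z != 0 -> 0 < z.
Proof. by apply: contraR; rewrite -leNgt => /clamp0 ->. Qed.

Lemma clamp_neq1 z : clamp z != 1 -> z < 1.
Proof. by apply: contraR; rewrite -leNgt => /clamp1 ->. Qed.

Lemma continuous_affine (k b : RR) : continuous (fun t : RR => k * t + b).
Proof.
apply: continuous_addR; last exact: cst_continuous.
by apply: continuous_mulR; [exact: cst_continuous | move=> ?; exact: cvg_id].
Qed.

Lemma homotopic_in_refl (T : topologicalType) (A : set T) : homotopic_in A A id id.
Proof.
exists (fun tx : RR * T => tx.2); split=> //.
by apply: continuous_subspaceT => -[? ?]; exact: cvg_snd.
Qed.

Lemma eq_homotopic_in (T U : topologicalType) (A : set T) (B : set U) (f f' g : T -> U) :
  homotopic_in A B f g -> (forall x, A x -> f x = f' x) -> homotopic_in A B f' g.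
Proof. by move=> [H [Hc HB H0 H1]] ff'; exists H; split=> // x Ax; rewrite H0 // ff'. Qed.

(** * Realizations of finite posets and maps between them *)

Definition comparable_of (E : Type) (lt : E -> E -> Prop) (x y : E) : Prop :=
  [\/ x = y, lt x y | lt y x].

Definition le_of (E : Type) (lt : E -> E -> Prop) (x y : E) : Prop := x = y \/ lt x y.

Lemma comparable_of_refl (E : Type) (lt : E -> E -> Prop) x : comparable_of lt x x.
Proof. exact: Or31. Qed.

Lemma comparable_of_sym (E : Type) (lt : E -> E -> Prop) x y :
  comparable_of lt x y -> comparable_of lt y x.
Proof. by case=> h; [apply: Or31 | apply: Or33 | apply: Or32]. Qed.

Lemma le_of_comparable (E : Type) (lt : E -> E -> Prop) x y :
  le_of lt x y -> comparable_of lt x y.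
Proof. by case=> h; [apply: Or31 | apply: Or32]. Qed.

Lemma le_of_comparable_sym (E : Type) (lt : E -> E -> Prop) x y :
  le_of lt x y -> comparable_of lt y x.
Proof. by move=> h; apply: comparable_of_sym; apply: le_of_comparable. Qed.

Definition enum_set (E : choiceType) (P : set E) : seq E := finmap.enum_fset (fset_set P).

Lemma enum_set_uniq (E : choiceType) (P : set E) : uniq (enum_set P).
Proof. exact: finmap.fset_uniq. Qed.

Lemma mem_enum_set (E : choiceType) (P : set E) x :
  finite_set P -> x \in enum_set P <-> P x.
Proof. by move=> finP; rewrite in_fset_set // inE. Qed.

Definition kron (E : eqType) (x y : E) : RR := (x == y)%:R.

Lemma kron_ge0 (E : eqType) (x y : E) : 0 <= kron x y.
Proof. exact: ler0n. Qed.

Lemma kron_neq0 (E : eqType) (x y : E) : kron x y != 0 -> x = y.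
Proof. by rewrite /kron; have [|_] := eqVneq x y; rewrite ?eqxx. Qed.

Lemma sum_kron_mul (E : eqType) (s : seq E) x (F : E -> RR) : uniq s ->
  \sum_(y <- s) kron x y * F y = if x \in s then F x else 0.
Proof.
elim: s => [|y s IH] /=; first by rewrite big_nil.
move=> /andP[ys us]; rewrite big_cons IH // in_cons /kron.
have [->|_] := eqVneq x y; first by rewrite (negPf ys) mul1r addr0.
by rewrite mul0r add0r.
Qed.

Lemma sum_kron (E : eqType) (s : seq E) x : uniq s ->
  \sum_(y <- s) kron x y = if x \in s then 1 else 0.
Proof.
by move=> us; rewrite -(sum_kron_mul x (fun=> 1) us); apply: eq_bigr => y _; rewrite mulr1.
Qed.

(* The affine extension of the vertex assignment [x |-> K x]. *)
Definition kernel_map (E E' : choiceType) (P : set E) (K : E -> E' -> RR) (w : E -> RR)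
  : {ptws E' -> RR} := fun y => \sum_(x <- enum_set P) w x * K x y.

Definition push (E E' : choiceType) (P : set E) (F : E -> E') (w : E -> RR) :=
  kernel_map P (fun x => kron (F x)) w.

Section Realization.
Variables (E : choiceType) (lt : E -> E -> Prop) (P : set E).
Hypothesis finP : finite_set P.

Lemma realizationP (v : {ptws E -> RR}) :
  realization lt P v <->
  [/\ (forall x, 0 <= v x), (forall x, v x != 0 -> P x),
      \sum_(x <- enum_set P) v x = 1 &
      (forall x y, v x != 0 -> v y != 0 -> comparable_of lt x y)].
Proof.
have sumE : (forall x, v x != 0 -> P x) ->
    \sum_(x \in [set x | v x != 0]) v x = \sum_(x <- enum_set P) v x.
  move=> vP; apply: fsbig_fwiden; first by move=> x /vP /(mem_enum_set x finP).
    exact: enum_set_uniq.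
  by move=> x [_ /negP]; rewrite negbK => /eqP.
split=> [[v0 vP _ v1 vc]|[v0 vP v1 vc]]; first by split=> //; rewrite -sumE.
split=> //; last by rewrite sumE.
exact: sub_finite_set vP finP.
Qed.

Lemma realization_supp v x : realization lt P v -> v x != 0 -> P x.
Proof. by case=> _ vP _ _ _; exact: vP. Qed.

Lemma realization_kron c : P c -> realization lt P (kron c : {ptws E -> RR}).
Proof.
move=> Pc; apply/realizationP; split.
- by move=> x; exact: kron_ge0.
- by move=> x /kron_neq0 <-.
- by rewrite sum_kron ?enum_set_uniq // (iffRL (mem_enum_set c finP) Pc).
- by move=> x y /kron_neq0 <- /kron_neq0 <-; exact: comparable_of_refl.
Qed.

Lemma kernel_map_const (g : E -> RR) (w : {ptws E -> RR}) :
  realization lt P w -> kernel_map P (fun _ y => g y) w = g.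
Proof.
move=> /realizationP[_ _ w1 _]; apply: funext => y.
by rewrite /kernel_map -mulr_suml w1 mul1r.
Qed.

Lemma push_id (w : {ptws E -> RR}) : realization lt P w -> push P id w = w.
Proof.
move=> Pw; apply: funext => y; rewrite /push /kernel_map.
under eq_bigr do rewrite mulrC /kron eq_sym -/(kron y _).
rewrite sum_kron_mul ?enum_set_uniq //; case: ifPn => // /negP ys.
have [//|wy] := eqVneq (w y) 0.
by case: ys; apply/(mem_enum_set y finP); exact: realization_supp wy.
Qed.

End Realization.

Lemma eq_kernel_map (E E' : choiceType) (P : set E) (K K' : E -> E' -> RR) w :
  (forall x y, P x -> K x y = K' x y) -> finite_set P ->
  kernel_map P K w = kernel_map P K' w.
Proof.
move=> hK finP; apply: funext => z; rewrite /kernel_map big_seq [RHS]big_seq.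
by apply: eq_bigr => x /(mem_enum_set x finP) Px; rewrite hK.
Qed.

Lemma kernel_map_comp (E E' E'' : choiceType) (P : set E) (P' : set E')
    (K1 : E -> E' -> RR) (K2 : E' -> E'' -> RR) w :
  kernel_map P' K2 (kernel_map P K1 w) =
  kernel_map P (fun x z => \sum_(y <- enum_set P') K1 x y * K2 y z) w.
Proof.
apply: funext => z; rewrite /kernel_map.
under eq_bigr do rewrite mulr_suml.
rewrite exchange_big /=; apply: eq_bigr => x _; rewrite mulr_sumr.
by apply: eq_bigr => y _; rewrite mulrA.
Qed.

Lemma push_comp (E E' E'' : choiceType) (P : set E) (P' : set E')
    (F : E -> E') (G : E' -> E'') w :
  finite_set P -> finite_set P' -> (forall x, P x -> P' (F x)) ->
  push P' G (push P F w) = push P (G \o F) w.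
Proof.
move=> finP finP' FP; rewrite /push kernel_map_comp; apply: eq_kernel_map => // x z Px.
by rewrite sum_kron_mul ?enum_set_uniq // (iffRL (mem_enum_set _ finP') (FP x Px)).
Qed.

Lemma continuous_kernel_map (E E' : choiceType) (P : set E) (K : E -> E' -> RR) :
  continuous (fun w : {ptws E -> RR} => kernel_map P K w).
Proof.
apply: ptws_continuous => y; apply: continuous_sumR => x.
by apply: continuous_mulR; [exact: ptws_eval_continuous | exact: cst_continuous].
Qed.

Lemma continuous_kernel_map_path (E E' : choiceType) (P : set E)
    (K : RR -> E -> E' -> RR) :
  (forall x y, continuous (fun t => K t x y)) ->
  continuous (fun tw : RR * {ptws E -> RR} => kernel_map P (K tw.1) tw.2).
Proof.
move=> hK; apply: ptws_continuous => y; apply: continuous_sumR => x.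
apply: continuous_mulR => tw.
  apply: (@continuous_comp _ _ _ snd (fun w : {ptws E -> RR} => w x)).
    exact: cvg_snd.
  exact: ptws_eval_continuous.
apply: (@continuous_comp _ _ _ fst (fun t => K t x y)); last exact: hK.
exact: cvg_fst.
Qed.

Section KernelMapRealization.
Variables (E E' : choiceType) (lt : E -> E -> Prop) (lt' : E' -> E' -> Prop).
Variables (P : set E) (P' : set E').
Hypotheses (finP : finite_set P) (finP' : finite_set P').

Lemma realization_kernel_map (K : E -> E' -> RR) (w : {ptws E -> RR}) :
  (forall x y, P x -> 0 <= K x y) -> (forall x y, P x -> K x y != 0 -> P' y) ->
  (forall x, P x -> \sum_(y <- enum_set P') K x y = 1) ->
  (forall x x' y y', P x -> P x' -> comparable_of lt x x' ->
     K x y != 0 -> K x' y' != 0 -> comparable_of lt' y y') ->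
  realization lt P w -> realization lt' P' (kernel_map P K w).
Proof.
move=> K0 KP' K1 Kc /(realizationP _ finP)[w0 wP w1 wc].
have supp y : kernel_map P K w y != 0 -> exists x, [/\ P x, w x != 0 & K x y != 0].
  rewrite /kernel_map; apply: contraNP => hn; apply/eqP; rewrite big1 // => x _.
  have [wx0|wx] := eqVneq (w x) 0; first by rewrite wx0 mul0r.
  have [Kx0|Kx] := eqVneq (K x y) 0; first by rewrite Kx0 mulr0.
  by case: hn; exists x; split=> //; exact: wP.
apply/(realizationP _ finP'); split.
- move=> y; apply: sumr_ge0 => x _.
  have [wx0|wx] := eqVneq (w x) 0; first by rewrite wx0 mul0r.
  by rewrite mulr_ge0 // K0 //; exact: wP.
- by move=> y /supp[x [Px _ Kxy]]; exact: KP' Kxy.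
- rewrite /kernel_map exchange_big /= -w1 big_seq [RHS]big_seq.
  apply: eq_bigr => x /(mem_enum_set x finP) Px.
  by rewrite -mulr_sumr K1 ?mulr1.
- move=> y y' /supp[x [Px wx Kx]] /supp[x' [Px' wx' Kx']].
  exact: Kc Px Px' (wc _ _ wx wx') Kx Kx'.
Qed.

Lemma realization_push (F : E -> E') (w : {ptws E -> RR}) :
  (forall x, P x -> P' (F x)) ->
  (forall x x', P x -> P x' -> comparable_of lt x x' -> comparable_of lt' (F x) (F x')) ->
  realization lt P w -> realization lt' P' (push P F w).
Proof.
move=> FP Fc; apply: realization_kernel_map.
- by move=> x y _; exact: kron_ge0.
- by move=> x y Px /kron_neq0 <-; exact: FP.
- move=> x Px; rewrite sum_kron ?enum_set_uniq //.
  by rewrite (iffRL (mem_enum_set _ finP') (FP x Px)).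
- by move=> x x' y y' Px Px' cx /kron_neq0 <- /kron_neq0 <-; exact: Fc.
Qed.

End KernelMapRealization.

(** * Homotopies by sweeping a retraction across the heights *)

Section Sweep.
Variables (E : choiceType) (lt : E -> E -> Prop) (P : set E).
Hypothesis finP : finite_set P.
Hypothesis le_of_trans : forall x y z, P x -> P y -> P z ->
  le_of lt x y -> le_of lt y z -> le_of lt x z.
Variable h : E -> nat.
Hypothesis h_lt : forall x y, P x -> P y -> lt x y -> (h x < h y)%N.
Variable e : E -> E.
Hypothesis e_P : forall x, P x -> P (e x).
Hypothesis e_le : forall x, P x -> le_of lt (e x) x.
Hypothesis e_comparable : forall x y, P x -> P y ->
  comparable_of lt x y -> comparable_of lt (e x) (e y).

Definition retract_kernel (a : RR) (sg : E -> RR) (c x y : E) : RR :=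
  a * kron c y + (1 - a) * (sg x * kron x y + (1 - sg x) * kron (e x) y).

Lemma retract_kernel_neq0 a sg c x y : retract_kernel a sg c x y != 0 ->
  [\/ a != 0 /\ c = y, sg x != 0 /\ x = y | sg x != 1 /\ e x = y].
Proof.
have term0 (k : RR) u : ~ (k != 0 /\ u = y) -> k * kron u y = 0.
  move=> hk; have [->|k0] := eqVneq k 0; first by rewrite mul0r.
  by have [uy|uy] := eqVneq u y; [case: hk | rewrite /kron (negPf uy) mulr0].
apply: contraNP => hn; apply/eqP; rewrite /retract_kernel.
rewrite term0; last by move=> hy; apply: hn; apply: Or31.
rewrite (term0 (sg x)); last by move=> hy; apply: hn; apply: Or32.
rewrite (term0 (1 - sg x)) ?add0r ?addr0 ?mulr0 // => -[s1 ey]; apply: hn.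
by apply: Or33; split=> //; apply: contraNneq s1 => ->; rewrite subrr.
Qed.

Lemma sum_retract_kernel a sg c x : P x -> (a != 0 -> P c) ->
  \sum_(y <- enum_set P) retract_kernel a sg c x y = 1.
Proof.
move=> Px Pc; have mem_s y : P y -> y \in enum_set P by move/(mem_enum_set y finP).
rewrite /retract_kernel big_split /= -!mulr_sumr big_split /= -!mulr_sumr.
rewrite !sum_kron ?enum_set_uniq // (mem_s x Px) (mem_s _ (e_P Px)) !mulr1.
have -> : sg x + (1 - sg x) = 1 by rewrite addrC subrK.
rewrite mulr1; have [->|a0] := eqVneq a 0; first by rewrite mul0r add0r subr0.
by rewrite (mem_s c (Pc a0)) mulr1 addrC subrK.
Qed.

Lemma realization_retract (a : RR) (sg : E -> RR) (c : E) (w : {ptws E -> RR}) :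
  0 <= a <= 1 -> (forall x, 0 <= sg x <= 1) ->
  (a != 0 -> P c /\ forall x, P x -> sg x = 0 /\ le_of lt (e x) c) ->
  (forall x x', P x -> P x' -> comparable_of lt x x' ->
     sg x != 0 -> sg x' != 1 -> le_of lt x' x) ->
  realization lt P w -> realization lt P (kernel_map P (retract_kernel a sg c) w).
Proof.
move=> /andP[a0 a1] sg01 apex sg_order; apply: realization_kernel_map => //.
- move=> x y _; have /andP[s0 s1] := sg01 x; rewrite /retract_kernel.
  rewrite addr_ge0 ?mulr_ge0 ?kron_ge0 ?subr_ge0 //.
  by rewrite addr_ge0 ?mulr_ge0 ?kron_ge0 ?subr_ge0.
- by move=> x y Px /retract_kernel_neq0[[/apex[Pc _] <-]|[_ <-]|[_ <-]] //; exact: e_P.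
- by move=> x Px; apply: sum_retract_kernel => // /apex[].
move=> x x' y y' Px Px' cx /retract_kernel_neq0 hy /retract_kernel_neq0 hy'.
have e_below_x x1 x2 : P x1 -> P x2 -> le_of lt x2 x1 -> le_of lt (e x2) x1.
  by move=> P1 P2; apply: le_of_trans (e_le P2) => //; exact: e_P.
case: hy => [[/apex[_ A] <-]|[s0 <-]|[s1 <-]];
  case: hy' => [[/apex[_ A'] <-]|[s0' <-]|[s1' <-]].
- exact: comparable_of_refl.
- by case: (A _ Px') => /eqP; rewrite (negPf s0').
- by apply: le_of_comparable_sym; case: (A _ Px').
- by case: (A' _ Px) => /eqP; rewrite (negPf s0).
- exact: cx.
- by apply: le_of_comparable_sym; apply: e_below_x => //; exact: sg_order.
- by apply: le_of_comparable; case: (A' _ Px).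
- apply: le_of_comparable; apply: e_below_x => //.
  by apply: sg_order => //; exact: comparable_of_sym.
- exact: e_comparable.
Qed.

Let N := (\max_(x <- enum_set P) h x).+1.

Lemma h_lt_N x : P x -> (h x < N)%N.
Proof. by move=> Px; rewrite ltnS; apply: leq_bigmax_seq => //; apply/(mem_enum_set x finP). Qed.

(* At any time only the vertices of one height level are in transit between
   [x] and [e x]; this is what keeps every intermediate support a chain. *)
Definition stage (al : RR) (x : E) : RR := clamp (al + (h x)%:R).

Lemma stage_order al x x' : P x -> P x' -> comparable_of lt x x' ->
  stage al x != 0 -> stage al x' != 1 -> le_of lt x' x.
Proof.
move=> Px Px' cx /clamp_neq0 pos /clamp_neq1 lt1.
have hle : (h x' <= h x)%N by rewrite -ltnS -(ltr_nat RR) -natr1; lra.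
case: cx => [->|l|l]; [by left | | by right].
by have := h_lt Px Px' l; rewrite ltnNge hle.
Qed.

Lemma sweep_homotopic (a al : RR -> RR) (c : E) (f0 f1 : {ptws E -> RR} -> {ptws E -> RR}) :
  continuous a -> continuous al -> (forall t, 0 <= a t <= 1) ->
  (forall t, 0 <= t <= 1 -> a t != 0 ->
     P c /\ forall x, P x -> stage (al t) x = 0 /\ le_of lt (e x) c) ->
  (forall w, realization lt P w ->
     kernel_map P (retract_kernel (a 0) (stage (al 0)) c) w = f0 w) ->
  (forall w, realization lt P w ->
     kernel_map P (retract_kernel (a 1) (stage (al 1)) c) w = f1 w) ->
  homotopic_in (realization lt P) (realization lt P) f0 f1.
Proof.
move=> ca cal a01 apex end0 end1.
exists (fun tw : RR * {ptws E -> RR} =>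
  kernel_map P (retract_kernel (a tw.1) (stage (al tw.1)) c) tw.2); split=> //.
- apply: continuous_subspaceT.
  apply: (continuous_kernel_map_path
    (K := fun t => retract_kernel (a t) (stage (al t)) c)) => x y.
  have cstage : continuous (fun t => stage (al t) x).
    move=> t; apply: continuous_comp; last exact: clamp_continuous.
    by apply: continuous_addR => //; exact: cst_continuous.
  rewrite /retract_kernel; repeat first
    [ exact: ca | exact: cstage | exact: cst_continuous
    | apply: continuous_subR | apply: continuous_addR | apply: continuous_mulR ].
- move=> t w t01 Pw; apply: realization_retract => //.
  + by move=> x; exact: clamp_itv.
  + exact: apex.
  + by move=> x x' Px Px' cx; exact: stage_order.
Qed.

Lemma push_homotopic_id :
  homotopic_in (realization lt P) (realization lt P) (push P e) id.
Proof.
have [[c Pc]|P0] := pselect (exists c, P c); last first.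
  apply: (eq_homotopic_in (@homotopic_in_refl _ (realization lt P))) => w /(realizationP _ finP)[_ wP w1 _].
  case: P0; apply: contrapT => P0; move: w1; rewrite big1 => [/eqP|x _].
    by rewrite eq_sym oner_eq0.
  by have [//|/wP Px] := eqVneq (w x) 0; case: P0; exists x.
pose al t : RR := N%:R * t + (1 - N%:R).
apply: (@sweep_homotopic (fun=> 0) al c).
- exact: cst_continuous.
- exact: continuous_affine.
- by move=> t; rewrite lexx ler01.
- by move=> t _; rewrite eqxx.
- move=> w Pw; apply: eq_kernel_map => // x y Px; rewrite /retract_kernel /stage /al.
  have hx : ((h x).+1%:R : RR) <= N%:R by rewrite ler_nat; exact: h_lt_N.
  rewrite clamp0; last by rewrite -natr1 in hx; lra.
  by rewrite !mul0r !add0r subr0 !mul1r.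
- move=> w Pw; rewrite /= -[RHS](push_id finP Pw); apply: eq_kernel_map => // x y _.
  rewrite /retract_kernel /stage /al clamp1; last by move: (ler0n RR (h x)); lra.
  by rewrite mul0r add0r subr0 mul1r subrr mul0r addr0 mul1r.
Qed.

Lemma retraction_contractible (c : E) : P c -> (forall x, P x -> le_of lt (e x) c) ->
  homotopic_in (realization lt P) (realization lt P) (fun _ => kron c) id.
Proof.
move=> Pc e_below_c.
pose a t : RR := clamp ((-2) * t + 1).
pose al t : RR := (2 * N%:R) * t + (1 - 2 * N%:R).
apply: (@sweep_homotopic a al c).
- by move=> t; apply: continuous_comp; [exact: continuous_affine | exact: clamp_continuous].
- exact: continuous_affine.
- by move=> t; exact: clamp_itv.
- move=> t /andP[t0 t1] /clamp_neq0 t_lt_half; split=> // x Px.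
  split; last exact: e_below_c.
  have hx : ((h x).+1%:R : RR) <= N%:R by rewrite ler_nat; exact: h_lt_N.
  rewrite -natr1 in hx; have N0 : (0 : RR) <= N%:R by [].
  by apply: clamp0; rewrite /al; nra.
- move=> w Pw; apply: eq_trans (kernel_map_const finP (kron c) Pw).
  apply: eq_kernel_map => // x y _; rewrite /retract_kernel /a clamp1; last by lra.
  by rewrite subrr mul0r addr0 mul1r.
- move=> w Pw; rewrite /= -[RHS](push_id finP Pw); apply: eq_kernel_map => // x y _.
  rewrite /retract_kernel /a /al clamp0; last by lra.
  rewrite /stage clamp1; last by move: (ler0n RR (h x)); lra.
  by rewrite mul0r add0r subr0 mul1r subrr mul0r addr0 mul1r.
Qed.

End Sweep.

Theorem realization_contractible (E : choiceType) (lt : E -> E -> Prop) (P : set E)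
    (h : E -> nat) (e : E -> E) (c : E) :
  finite_set P ->
  (forall x y z, P x -> P y -> P z -> le_of lt x y -> le_of lt y z -> le_of lt x z) ->
  (forall x y, P x -> P y -> lt x y -> (h x < h y)%N) ->
  (forall x, P x -> P (e x)) -> (forall x, P x -> le_of lt (e x) x) ->
  (forall x y, P x -> P y -> comparable_of lt x y -> comparable_of lt (e x) (e y)) ->
  P c -> (forall x, P x -> le_of lt (e x) c) ->
  htpy_equiv (realization lt P) pt.
Proof.
move=> finP le_trans h_lt e_P e_le e_cmp Pc e_below_c.
exists (fun _ => 0), (fun _ => kron c : {ptws E -> RR}); split; [split|split].
- by apply: continuous_subspaceT; exact: cst_continuous.
- by [].
- by apply: continuous_subspaceT; exact: cst_continuous.
- by move=> _ _; exact: realization_kron.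
- exact: (retraction_contractible finP le_trans h_lt e_P e_le e_cmp Pc e_below_c).
- by apply: (eq_homotopic_in (@homotopic_in_refl _ pt)) => x ->.
Qed.

Theorem realization_htpy_equiv (E E' : choiceType) (lt : E -> E -> Prop)
    (lt' : E' -> E' -> Prop) (P : set E) (P' : set E') (h : E -> nat)
    (F : E -> E') (G : E' -> E) :
  finite_set P -> finite_set P' ->
  (forall x y z, P x -> P y -> P z -> le_of lt x y -> le_of lt y z -> le_of lt x z) ->
  (forall x y, P x -> P y -> lt x y -> (h x < h y)%N) ->
  (forall x, P x -> P' (F x)) -> (forall y, P' y -> P (G y)) ->
  (forall x x', P x -> P x' -> comparable_of lt x x' -> comparable_of lt' (F x) (F x')) ->
  (forall y y', P' y -> P' y' -> comparable_of lt' y y' -> comparable_of lt (G y) (G y')) ->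
  (forall y, P' y -> F (G y) = y) -> (forall x, P x -> le_of lt (G (F x)) x) ->
  htpy_equiv (realization lt P) (realization lt' P').
Proof.
move=> finP finP' le_trans h_lt FP GP Fc Gc FG GF.
exists (push P F), (push P' G); split; [split|split].
- by apply: continuous_subspaceT; exact: continuous_kernel_map.
- by move=> w; apply: realization_push.
- by apply: continuous_subspaceT; exact: continuous_kernel_map.
- by move=> w; apply: realization_push.
- have GF_P x : P x -> P (G (F x)) by move=> Px; apply: GP; exact: FP.
  have GF_cmp x x' : P x -> P x' -> comparable_of lt x x' ->
      comparable_of lt (G (F x)) (G (F x')).
    by move=> Px Px' cx; apply: Gc; [exact: FP | exact: FP | exact: Fc].
  apply: (eq_homotopic_in (push_homotopic_id finP le_trans h_lt GF_P GF GF_cmp)).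
  by move=> w Pw; rewrite /= push_comp.
- apply: (eq_homotopic_in (@homotopic_in_refl _ (realization lt' P'))) => w Pw.
  rewrite /= push_comp // -[LHS](push_id finP' Pw).
  by apply: eq_kernel_map => // y z P'y; rewrite /= FG.
Qed.

(** * The monoids Λ^{p,q,r} *)

Definition leT (x y : triple) : Prop :=
  (x.1.1 <= y.1.1)%N /\ (x.1.2 <= y.1.2)%N /\ (x.2 <= y.2)%N.

Definition tsub (y x : triple) : triple := (y.1.1 - x.1.1, y.1.2 - x.1.2, y.2 - x.2)%N.

Lemma tadd_tsub x y : leT x y -> tadd x (tsub y x) = y.
Proof. by case: x y => [[? ?] ?] [[? ?] ?]; rewrite /leT /tadd /tsub /= => -[? [? ?]]; congr (_, _, _); lia. Qed.

Lemma leT_tadd x v : leT x (tadd x v).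
Proof. by case: x v => [[? ?] ?] [[? ?] ?]; rewrite /leT /tadd /=; lia. Qed.

Lemma tadd_assoc x y z : tadd x (tadd y z) = tadd (tadd x y) z.
Proof. by case: x y z => [[? ?] ?] [[? ?] ?] [[? ?] ?]; rewrite /tadd /=; congr (_, _, _); lia. Qed.

Lemma tadd_perm x y z : tadd (tadd x y) z = tadd (tadd x z) y.
Proof. by case: x y z => [[? ?] ?] [[? ?] ?] [[? ?] ?]; rewrite /tadd /=; congr (_, _, _); lia. Qed.

Section Monoid.
Variables p q r : nat.

(* Both sides of pa + qb = rc have weight r(p + q). *)
Definition weight (x : triple) : nat := (r * x.1.1 + r * x.1.2 + (p + q) * x.2)%N.

Lemma weight_tadd x y : weight (tadd x y) = (weight x + weight y)%N.
Proof. by case: x y => [[? ?] ?] [[? ?] ?]; rewrite /weight /tadd /=; lia. Qed.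

Lemma weight_tcong x y : tcong p q r x y -> weight x = weight y.
Proof.
elim=> {x y} [x y [l [-> ->]]|x|x y _ ->|x y z _ -> _ ->] //.
by rewrite !weight_tadd /weight /=; lia.
Qed.

Lemma weight_leT x y : leT x y -> (weight x <= weight y)%N.
Proof.
case: x y => [[a b] c] [[a' b'] c'] [/= ha [hb hc]].
by rewrite /weight /= !leq_add // leq_mul.
Qed.

Lemma tcong_tadd x y v : tcong p q r x y -> tcong p q r (tadd x v) (tadd y v).
Proof.
elim=> {x y} [x y [l [-> ->]]|x|x y _|x y z _ h1 _ h2].
- by apply: rst_step; exists (tadd l v); split; exact: tadd_perm.
- exact: rst_refl.
- exact: rst_sym.
- exact: rst_trans h2.
Qed.

Lemma cls_self x : cls p q r x x.
Proof. exact: rst_refl. Qed.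

Lemma cls_tcong x y : tcong p q r x y -> cls p q r x = cls p q r y.
Proof.
move=> xy; rewrite /cls; apply/seteqP; split=> z /= hz.
- exact: rst_trans (rst_sym _ _ _ _ xy) hz.
- exact: rst_trans xy hz.
Qed.

Lemma tcong_cls x y : cls p q r x = cls p q r y -> tcong p q r x y.
Proof. by move=> e; have := cls_self y; rewrite -e. Qed.

Lemma leL_intro x y : leT x y -> leL p q r (cls p q r x) (cls p q r y).
Proof. by move=> xy; exists x, y, (tsub y x); split; rewrite // tadd_tsub //; exact: rst_refl. Qed.

Lemma leL_elim S S' : leL p q r S S' ->
  exists x y, [/\ S = cls p q r x, S' = cls p q r y & leT x y].
Proof.
move=> [x [y [v [-> -> xvy]]]]; exists x, (tadd x v); split=> //.
- exact/cls_tcong/rst_sym.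
- exact: leT_tadd.
Qed.

Lemma leL_refl S : isElt p q r S -> leL p q r S S.
Proof. by move=> [x ->]; apply: leL_intro; rewrite /leT; lia. Qed.

Lemma zero_leL S : isElt p q r S -> leL p q r (zeroL p q r) S.
Proof. by move=> [x ->]; apply: leL_intro; rewrite /leT /t0 /=; lia. Qed.

Lemma leL_trans S1 S2 S3 : leL p q r S1 S2 -> leL p q r S2 S3 -> leL p q r S1 S3.
Proof.
move=> [x [y [v [-> e2 h1]]]] [y' [z [v' [e2' -> h2]]]].
exists x, z, (tadd v v'); split=> //; rewrite tadd_assoc.
apply: rst_trans (tcong_tadd v' h1) _; apply: rst_trans _ h2.
by apply: tcong_tadd; apply: tcong_cls; rewrite -e2 -e2'.
Qed.

Definition height (S : set triple) : nat := weight (xget t0 S).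

Lemma height_cls x : height (cls p q r x) = weight x.
Proof.
rewrite /height; case: xgetP => [y _ hy|hn]; first exact/esym/weight_tcong.
by case: (hn x); exact: cls_self.
Qed.

Hypotheses (p_gt0 : (0 < p)%N) (q_gt0 : (0 < q)%N) (r_gt0 : (0 < r)%N).

Lemma leT_weight_eq x y : leT x y -> weight x = weight y -> x = y.
Proof.
case: x y => [[a b] c] [[a' b'] c'] [/= ha [hb hc]]; rewrite /weight /= => e.
by congr (_, _, _); nia.
Qed.

Lemma leL_antisym S S' : leL p q r S S' -> leL p q r S' S -> S = S'.
Proof.
move=> /leL_elim[x [y [-> -> xy]]] /leL_elim[y' [x' [ey ex yx]]].
have wy : weight y = weight y' by apply/weight_tcong/tcong_cls.
have wx : weight x = weight x' by apply/weight_tcong/tcong_cls.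
have := weight_leT xy; have := weight_leT yx; rewrite -wy -wx => h1 h2.
by rewrite (leT_weight_eq xy) //; apply/eqP; rewrite eqn_leq h1 h2.
Qed.

Lemma ltL_height S S' : ltL p q r S S' -> (height S < height S')%N.
Proof.
move=> [/leL_elim[x [y [-> -> xy]]] ne]; rewrite !height_cls ltn_neqAle weight_leT // andbT.
by apply/eqP => /(leT_weight_eq xy) e; apply: ne; rewrite e.
Qed.

Lemma cls_eq0 x : cls p q r x = zeroL p q r -> x = t0.
Proof.
move=> /tcong_cls/weight_tcong; rewrite /weight /t0 /=.
by case: x => [[a b] c] /= e; congr (_, _, _); nia.
Qed.

Lemma le_of_leL S S' : leL p q r S S' -> le_of (ltL p q r) S S'.
Proof. by move=> h; have [e|ne] := pselect (S = S'); [left | right]. Qed.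

Lemma leL_of_le S S' : isElt p q r S -> le_of (ltL p q r) S S' -> leL p q r S S'.
Proof. by move=> SE [<-|[]]; [exact: leL_refl | ]. Qed.

Lemma interval_le_of_trans lam S1 S2 S3 :
  intervalL p q r lam S1 -> intervalL p q r lam S2 ->
  le_of (ltL p q r) S1 S2 -> le_of (ltL p q r) S2 S3 -> le_of (ltL p q r) S1 S3.
Proof.
move=> [S1E _ _] [S2E _ _] h12 h23; apply: le_of_leL.
exact: leL_trans (leL_of_le S1E h12) (leL_of_le S2E h23).
Qed.

Lemma finite_interval lam : isElt p q r lam -> finite_set (intervalL p q r lam).
Proof.
move=> [y ->]; set M := weight y.
pose box := [seq (ij, k) | ij <- [seq (i, j) | i <- iota 0 M.+1, j <- iota 0 M.+1],
                           k <- iota 0 M.+1].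
apply: (@sub_finite_set _ _ (cls p q r @` [set` box])); last first.
  exact/finite_image/finite_seq.
move=> S [_ _ [/leL_elim[x [y' [-> ey xy]]] _]]; exists x => //=.
have := weight_leT xy; rewrite -(weight_tcong (tcong_cls ey)) -/M.
case: x {xy} => [[a b] c]; rewrite /weight /= => hM.
apply: (@allpairs_f _ _ _ (fun ij k => (ij, k))); last by rewrite mem_iota; nia.
by apply: (@allpairs_f _ _ _ (fun i j => (i, j))); rewrite mem_iota; nia.
Qed.

End Monoid.

(** * Transition maps *)

Section Tau.
Local Open Scope nat_scope.
Variables p s : nat.
Hypothesis p_gt0 : 0 < p.

Lemma tau0 : tau p s 0 = 0.
Proof. by rewrite /tau div0n mod0n mul0n min0n. Qed.

Lemma tau_addp m : tau p s (m + p) = tau p s m + s.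
Proof.
rewrite /tau modnDr; have -> : (m + p) %/ p = (m %/ p).+1.
  by rewrite divnDr ?dvdnn // divnn p_gt0 addn1.
by rewrite mulSn; lia.
Qed.

Lemma leq_tau m n : m <= n -> tau p s m <= tau p s n.
Proof.
move=> mn; rewrite /tau.
have := divn_eq m p; have := divn_eq n p.
have := ltn_pmod m p_gt0; have := ltn_pmod n p_gt0; have := leq_div2r p mn.
move: (m %/ p) (n %/ p) (m %% p) (n %% p) => k k' i j.
rewrite leq_eqVlt => /orP[/eqP <-|lt_k] hj hi en em.
  apply: leq_add => //; rewrite geq_min !leq_min; lia.
case: s => [|s']; first by rewrite !muln0; lia.
have : k.+1 * s'.+1 <= k' * s'.+1 by exact: leq_mul.
rewrite mulSn; lia.
Qed.

Hypothesis s_gt0 : 0 < s.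

Lemma tau_eq0 m : (2 <= s \/ p = 1) -> tau p s m = 0 -> m = 0.
Proof.
case=> [s_ge2|->]; rewrite /tau; last by rewrite divn1 modn1 min0n addn0 => /eqP; rewrite muln_eq0; lia.
move/eqP; rewrite addn_eq0 => /andP[/eqP q0 /eqP min0].
have mp0 : m %/ p = 0 by move: q0 => /eqP; rewrite muln_eq0; lia.
rewrite (divn_eq m p) mp0 mul0n add0n; move: min0; rewrite /minn; case: ifP; lia.
Qed.

Hypothesis s_le_p : s <= p.

Lemma tau_retract m : tau s p (tau p s m) <= m.
Proof.
have hmin : minn (m %% p) s.-1 < s by rewrite gtn_min; apply/orP; right; lia.
rewrite {1}/tau divnMDl // modnMDl (divn_small hmin) (modn_small hmin) addn0.
rewrite {3}(divn_eq m p) leq_add2l !geq_min; lia.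
Qed.

Lemma tau_section m : tau p s (tau s p m) = m.
Proof.
have hm := ltn_pmod m s_gt0; rewrite /tau.
have -> : minn (m %% s) p.-1 = m %% s by apply/minn_idPl; lia.
rewrite divnMDl // modnMDl (divn_small (leq_trans hm s_le_p)).
rewrite (modn_small (leq_trans hm s_le_p)) addn0.
have -> : minn (m %% s) s.-1 = m %% s by apply/minn_idPl; lia.
by rewrite -divn_eq.
Qed.

End Tau.

Section TransitionMap.
Variables p q r s t u : nat.
Hypotheses (p_gt0 : (0 < p)%N) (q_gt0 : (0 < q)%N) (r_gt0 : (0 < r)%N).

Lemma Trep_tcong x y :
  tcong p q r x y -> tcong s t u (Trep p q r s t u x) (Trep p q r s t u y).
Proof.
elim=> {x y} [x y [l [-> ->]]|x|x y _|x y z _ h1 _ h2].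
- apply: rst_step; exists (Trep p q r s t u l).
  by rewrite /Trep /tadd /= !addn0 !tau_addp.
- exact: rst_refl.
- exact: rst_sym.
- exact: rst_trans h2.
Qed.

Lemma Tmap_cls x : Tmap p q r s t u (cls p q r x) = cls s t u (Trep p q r s t u x).
Proof.
apply/seteqP; split=> [z [x' [xx' x'z]]|z xz]; last by exists x; split=> //; exact: cls_self.
exact: rst_trans (Trep_tcong xx') x'z.
Qed.

Lemma Tmap_isElt S : isElt p q r S -> isElt s t u (Tmap p q r s t u S).
Proof. by move=> [x ->]; rewrite Tmap_cls; exists (Trep p q r s t u x). Qed.

Lemma Tmap_zero : Tmap p q r s t u (zeroL p q r) = zeroL s t u.
Proof. by rewrite /zeroL Tmap_cls /Trep /t0 /= !tau0. Qed.

Lemma Tmap_leL (S S' : set triple) : leL p q r S S' ->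
  leL s t u (Tmap p q r s t u S) (Tmap p q r s t u S').
Proof.
move=> /leL_elim[x [y [-> -> [h1 [h2 h3]]]]]; rewrite !Tmap_cls.
by apply: leL_intro; split; [|split]; apply: leq_tau.
Qed.

Lemma comparable_Tmap S S' : comparable_of (ltL p q r) S S' ->
  comparable_of (ltL s t u) (Tmap p q r s t u S) (Tmap p q r s t u S').
Proof.
case=> [->|[l _]|[l _]]; first exact: comparable_of_refl.
- by apply/le_of_comparable/le_of_leL; exact: Tmap_leL.
- by apply/le_of_comparable_sym/le_of_leL; exact: Tmap_leL.
Qed.

End TransitionMap.

(* [2 <= s \/ p = 1] is what makes [tau p s m = 0] force [m = 0]. *)
Definition admissible (p q r s t u : nat) : Prop :=
  [/\ (0 < s <= p)%N, (0 < t <= q)%N, (0 < u <= r)%N &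
      [/\ (2 <= s)%N \/ p = 1%N, (2 <= t)%N \/ q = 1%N & (2 <= u)%N \/ r = 1%N]].

Section Admissible.
Variables p q r s t u : nat.
Hypothesis adm : admissible p q r s t u.

Let s_gt0 : (0 < s)%N.  Proof. by case: adm => /andP[]. Qed.
Let t_gt0 : (0 < t)%N.  Proof. by case: adm => _ /andP[]. Qed.
Let u_gt0 : (0 < u)%N.  Proof. by case: adm => _ _ /andP[]. Qed.
Let p_gt0 : (0 < p)%N.  Proof. by case: adm => /andP[? ?] _ _ _; lia. Qed.
Let q_gt0 : (0 < q)%N.  Proof. by case: adm => _ /andP[? ?] _ _; lia. Qed.
Let r_gt0 : (0 < r)%N.  Proof. by case: adm => _ _ /andP[? ?] _; lia. Qed.

Lemma Tmap_section S : isElt s t u S -> Tmap p q r s t u (Tmap s t u p q r S) = S.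
Proof.
case: adm => /andP[_ sp] /andP[_ tq] /andP[_ ur] _ [[[a b] c] ->].
by rewrite !Tmap_cls // /Trep /= !tau_section.
Qed.

Lemma Tmap_retract_leL S : isElt p q r S -> leL p q r (Tmap s t u p q r (Tmap p q r s t u S)) S.
Proof.
case: adm => /andP[_ sp] /andP[_ tq] /andP[_ ur] _ [x ->].
rewrite !Tmap_cls //; apply: leL_intro.
by split; [|split]; apply: tau_retract.
Qed.

Lemma Tmap_eq0 S : isElt p q r S -> Tmap p q r s t u S = zeroL s t u -> S = zeroL p q r.
Proof.
case: adm => _ _ _ [hs ht hu] [[[a b] c] ->].
rewrite Tmap_cls // => /cls_eq0 -/(_ s_gt0 t_gt0 u_gt0) [/tau_eq0 a0 /tau_eq0 b0 /tau_eq0 c0].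
by rewrite (a0 p_gt0 s_gt0 hs) (b0 q_gt0 t_gt0 ht) (c0 r_gt0 u_gt0 hu).
Qed.

Lemma Tmap_retract_eq0 S : isElt p q r S -> Tmap s t u p q r (Tmap p q r s t u S) = zeroL p q r -> S = zeroL p q r.
Proof.
move=> SE e; apply: Tmap_eq0 => //.
by rewrite -(Tmap_section (Tmap_isElt s t u p_gt0 q_gt0 r_gt0 SE)) e Tmap_zero.
Qed.

End Admissible.

(** * Frobenius complexes along transition maps *)

Section FrobeniusTransition.
Variables p q r s t u : nat.
Hypothesis adm : admissible p q r s t u.
Variable lam : set triple.
Hypothesis lam_pos : posL p q r lam.

Let s_gt0 : (0 < s)%N.  Proof. by case: adm => /andP[]. Qed.
Let t_gt0 : (0 < t)%N.  Proof. by case: adm => _ /andP[]. Qed.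
Let u_gt0 : (0 < u)%N.  Proof. by case: adm => _ _ /andP[]. Qed.
Let p_gt0 : (0 < p)%N.  Proof. by case: adm => /andP[? ?] _ _ _; lia. Qed.
Let q_gt0 : (0 < q)%N.  Proof. by case: adm => _ /andP[? ?] _ _; lia. Qed.
Let r_gt0 : (0 < r)%N.  Proof. by case: adm => _ _ /andP[? ?] _; lia. Qed.
Let lamE : isElt p q r lam.  Proof. by case: lam_pos. Qed.

Notation T := (Tmap p q r s t u).
Notation T' := (Tmap s t u p q r).

Lemma interval_Tmap S : T' (T lam) = lam ->
  intervalL p q r lam S -> intervalL s t u (T lam) (T S).
Proof.
move=> fix_lam [SE [_ S0] [Sl Sln]]; have TSE := Tmap_isElt s t u p_gt0 q_gt0 r_gt0 SE.
split=> //; split.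
- exact: zero_leL.
- by move=> e; apply: S0; rewrite (Tmap_eq0 adm SE (esym e)).
- exact: Tmap_leL.
- move=> e; apply: Sln; apply: (leL_antisym p_gt0 q_gt0 r_gt0 Sl).
  by rewrite -{1}fix_lam -e; exact: Tmap_retract_leL.
Qed.

Lemma interval_Tmap_section S : T' (T lam) = lam ->
  intervalL s t u (T lam) S -> intervalL p q r lam (T' S).
Proof.
move=> fix_lam [SE [_ S0] [Sl Sln]]; have T'SE := Tmap_isElt p q r s_gt0 t_gt0 u_gt0 SE.
split=> //; split.
- exact: zero_leL.
- by move=> e; apply: S0; rewrite -(Tmap_section adm SE) -e Tmap_zero.
- by rewrite -fix_lam; exact: Tmap_leL.
- by move=> e; apply: Sln; rewrite -(Tmap_section adm SE) e.
Qed.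

Lemma interval_retract S :
  intervalL p q r lam S -> intervalL p q r lam (T' (T S)).
Proof.
move=> [SE [_ S0] [Sl Sln]].
have RSE : isElt p q r (T' (T S)).
  by apply: Tmap_isElt => //; exact: Tmap_isElt.
split=> //; split.
- exact: zero_leL.
- by move=> e; apply: S0; rewrite (Tmap_retract_eq0 adm SE (esym e)).
- exact: leL_trans (Tmap_retract_leL adm SE) Sl.
- move=> e; apply: Sln; apply: (leL_antisym p_gt0 q_gt0 r_gt0 Sl).
  by rewrite -{1}e; exact: Tmap_retract_leL.
Qed.

Lemma interval_retract_apex : T' (T lam) <> lam -> intervalL p q r lam (T' (T lam)).
Proof.
move=> nfix; have RlamE : isElt p q r (T' (T lam)).
  by apply: Tmap_isElt => //; exact: Tmap_isElt.
split=> //; split.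
- exact: zero_leL.
- by move=> e; case: lam_pos => _; apply; rewrite (Tmap_retract_eq0 adm lamE (esym e)).
- exact: Tmap_retract_leL.
- exact: nfix.
Qed.

Lemma comparable_retract S S' : comparable_of (ltL p q r) S S' ->
  comparable_of (ltL p q r) (T' (T S)) (T' (T S')).
Proof. by move=> /comparable_Tmap cS; apply: comparable_Tmap => //; exact: cS. Qed.


Theorem Frob_transition_fixed : T' (T lam) = lam ->
  htpy_equiv (Frob p q r lam) (Frob s t u (T lam)).
Proof.
move=> fix_lam; apply: (realization_htpy_equiv (h := height p q r)).
- exact: finite_interval.
- by apply: finite_interval => //; exact: Tmap_isElt.
- by move=> S1 S2 S3 P1 P2 _; exact: (interval_le_of_trans P1 P2).
- by move=> S S' _ _; exact: ltL_height.
- by move=> S; exact: interval_Tmap.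
- by move=> S; exact: interval_Tmap_section.
- by move=> S S' _ _; exact: comparable_Tmap.
- by move=> S S' _ _; exact: comparable_Tmap.
- by move=> S [SE _ _]; exact: Tmap_section.
- by move=> S [SE _ _]; apply/le_of_leL/Tmap_retract_leL.
Qed.

Theorem Frob_transition_contractible : T' (T lam) <> lam -> htpy_equiv (Frob p q r lam) pt.
Proof.
move=> nfix; apply: (realization_contractible (h := height p q r) (e := fun S => T' (T S))).
- exact: finite_interval.
- by move=> S1 S2 S3 P1 P2 _; exact: (interval_le_of_trans P1 P2).
- by move=> S S' _ _; exact: ltL_height.
- exact: interval_retract.
- by move=> S [SE _ _]; apply/le_of_leL/Tmap_retract_leL.
- by move=> S S' _ _; exact: comparable_retract.
- exact: interval_retract_apex.
- by move=> S [SE _ [Sl _]]; apply/le_of_leL/Tmap_leL/Tmap_leL.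
Qed.

End FrobeniusTransition.

Theorem theorem3p4 (p q r : nat) (lam : set triple) :
  (0 < p)%N -> (0 < q)%N -> (0 < r)%N -> (p <= q)%N -> (2 <= r)%N ->
  posL p q r lam ->
  [/\ (p = 1%N -> q = 1%N ->
         (Tmap 1 1 2 1 1 r (Tmap 1 1 r 1 1 2 lam) = lam ->
            htpy_equiv (Frob 1 1 r lam) (Frob 1 1 2 (Tmap 1 1 r 1 1 2 lam))) /\
         (Tmap 1 1 2 1 1 r (Tmap 1 1 r 1 1 2 lam) <> lam ->
            htpy_equiv (Frob 1 1 r lam) pt)),
      (p = 1%N -> (2 <= q)%N ->
         (Tmap 1 2 2 1 q r (Tmap 1 q r 1 2 2 lam) = lam ->
            htpy_equiv (Frob 1 q r lam) (Frob 1 2 2 (Tmap 1 q r 1 2 2 lam))) /\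
         (Tmap 1 2 2 1 q r (Tmap 1 q r 1 2 2 lam) <> lam ->
            htpy_equiv (Frob 1 q r lam) pt)) &
      ((2 <= p)%N ->
         (Tmap 2 2 2 p q r (Tmap p q r 2 2 2 lam) = lam ->
            htpy_equiv (Frob p q r lam) (Frob 2 2 2 (Tmap p q r 2 2 2 lam))) /\
         (Tmap 2 2 2 p q r (Tmap p q r 2 2 2 lam) <> lam ->
            htpy_equiv (Frob p q r lam) pt))].
Proof.
move=> p_gt0 q_gt0 r_gt0 pq r_ge2 lam_pos.
have frob_transition s t u : admissible p q r s t u ->
  (Tmap s t u p q r (Tmap p q r s t u lam) = lam ->
     htpy_equiv (Frob p q r lam) (Frob s t u (Tmap p q r s t u lam))) /\
  (Tmap s t u p q r (Tmap p q r s t u lam) <> lam -> htpy_equiv (Frob p q r lam) pt).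
  by move=> adm; split; [exact: Frob_transition_fixed | exact: Frob_transition_contractible].
split=> [p1 q1|p1 q_ge2|p_ge2]; [subst p q | subst p |]; apply: frob_transition.
- by split; rewrite ?r_ge2 //; split; [right | right | left].
- by split; rewrite ?r_ge2 ?q_ge2 //; split; [right | left | left].
- have q_ge2 : (2 <= q)%N by exact: leq_trans pq.
  by split; rewrite ?r_ge2 ?q_ge2 ?p_ge2 //; split; left.
Qed.
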